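(* Let $X=(T,E)$ and $Y=(Z,F)$ be colored graphs and let $W=(W_{i\alpha,j\beta})_{i\alpha,j\beta\in T\times Z}$ be the fundamental magic biunitary of $A(X*Y)$. Then for all $\alpha,\beta\in Z$ and all $i,j\in T$, $$\sum_{k\in T}W_{i\alpha,k\beta}=\sum_{k\in T}W_{k\alpha,j\beta};$$ in particular the element $V_{\alpha\beta}:=\sum_kW_{i\alpha,k\beta}$ is independent of $i$ (and equals $\sum_kW_{k\alpha,j\beta}$ for any $j$). The matrix $V=(V_{\alpha\beta})_{\alpha,\beta\in Z}$ is a magic biunitary.
   Context: A colored graph $X=(V,E)$ is a finite set $V$ with a partition $E=\{E_1,\dots,E_p\}$ of $(V\times V)-\Delta_V$. Free product: for $X=(T,E)$, $E=\{E_1,\dots,E_p\}$, and $Y=(Z,F)$, $F=\{F_1,\dots,F_q\}$, $X*Y$ has vertex set $T\times Z$ and partition $\{E_r^\circ\}\cup\{F_s^\circ\}$, $E_r^\circ=\{(i\alpha,j\alpha)\mid(i,j)\in E_r,\alpha\in Z\}$, $F_s^\circ=\{(i\alpha,j\beta)\mid i,j\in T,(\alpha,\beta)\in F_s\}$. A magic biunitary is a square matrix of projections whose rows and columns are partitions of unity. For a colored graph on $N$ vertices, $A(\cdot)$ is the quotient of the universal C*-algebra generated by the entries of an $N\times N$ magic biunitary $W$ by the relations $Wd=dW$, $d$ the Laplacian ($d_{ii}=0$, $d_{xy}=c(k)$ for $(x,y)$ in the $k$-th class, $c$ injective into ${\mathbb C}$); equivalently by the relations $\sum_{z:(z,y)\in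 C}W_{xz}=\sum_{z:(x,z)\in C}W_{zy}$ for every class $C$ of the partition. *)

From HB Require Import structures.
From mathcomp Require Import all_boot all_order all_algebra.
Set Implicit Arguments. Unset Strict Implicit. Unset Printing Implicit Defensive.
Import GRing.Theory.
Local Open Scope ring_scope.

Definition is_involution (A : pzRingType) (star : A -> A) : Prop :=
  [/\ forall x y, star (x + y) = star x + star y,
      forall x y, star (x * y) = star y * star x,
      forall x, star (star x) = x & star 1 = 1].

Definition offdiag (V : finType) : {set V * V} := [set u | u.1 != u.2].

Definition colored_graph (V : finType) (E : {set {set V * V}}) : Prop :=
  partition E (offdiag V).

Definition free_product (T Z : finType)
  (E : {set {set T * T}}) (F : {set {set Z * Z}}) : {set {set (T * Z) * (T * Z)}} :=
  [set [set (((u.1, a), (u.2, a)) : (T * Z) * (T * Z)) | u in C, a in [set: Z]] | C : {set T * T} in E]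
  :|: [set [set (((x.1, u.1), (x.2, u.2)) : (T * Z) * (T * Z)) | x in [set: T * T], u in C]
         | C : {set Z * Z} in F].

Definition is_proj (A : pzRingType) (star : A -> A) (p : A) : Prop :=
  p * p = p /\ star p = p.

Definition partition_of_unity (A : pzRingType) (star : A -> A) (I : finType)
  (f : I -> A) : Prop :=
  [/\ forall i, is_proj star (f i),
      forall i j, i != j -> f i * f j = 0 &
      \sum_(i : I) f i = 1].

Definition magic (A : pzRingType) (star : A -> A) (I : finType) (W : I -> I -> A) : Prop :=
  (forall x, partition_of_unity star (W x)) /\
  (forall y, partition_of_unity star (fun x => W x y)).

Definition A_relations (A : pzRingType) (star : A -> A) (V : finType)
  (E : {set {set V * V}}) (W : V -> V -> A) : Prop :=
  magic star W /\
  forall C, C \in E -> forall x y : V,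
    \sum_(z | (z, y) \in C) W x z = \sum_(z | (x, z) \in C) W z y.

From HB Require Import structures.
From mathcomp Require Import all_boot all_order all_algebra.
Import GRing.Theory.
Local Open Scope ring_scope.
Set Implicit Arguments. Unset Strict Implicit.

(* For a class C of X, the class C° of X * Y relates (i,a) and (k,b) exactly
   when (i,k) is in C and a = b.  Reading the relation W d = d W of A(X * Y)
   at the entry ((i,a),(j,b)) for the class C° therefore gives
   sum_{(k,j) in C} W_{ia,kb} = sum_{(i,k) in C} W_{ka,jb}.  Summing over the
   classes of X, which partition the off-diagonal pairs, and adding the
   diagonal term W_{ia,jb} to both sides yields the first claim.  The rows and
   columns of V are then obtained by grouping the row (i,a) and the column
   (j,b) of W, both partitions of unity, along the second coordinate. *)

Section PartitionOfUnity.

Variables (A : pzRingType) (star : A -> A).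
Hypothesis star_add : {morph star : x y / x + y}.

Lemma star_sum (I : finType) (P : pred I) (f : I -> A) :
  star (\sum_(i | P i) f i) = \sum_(i | P i) star (f i).
Proof.
have star0 : star 0 = 0 by apply: (addrI (star 0)); rewrite -star_add !addr0.
exact: (big_morph star star_add star0).
Qed.

Lemma eq_partition_of_unity (I : finType) (f g : I -> A) :
  f =1 g -> partition_of_unity star f -> partition_of_unity star g.
Proof.
move=> eq_fg [proj_f orth_f sum_f]; split=> [i | i j | ].
- by rewrite -eq_fg.
- by rewrite -!eq_fg; apply: orth_f.
- by rewrite -(eq_bigr _ (fun i _ => eq_fg i)).
Qed.

Variables (I : finType) (f : I -> A).
Hypothesis f_pu : partition_of_unity star f.

Lemma partition_of_unity_sumM (P Q : pred I) :
  (\sum_(i | P i) f i) * (\sum_(j | Q j) f j) = \sum_(i | P i && Q i) f i.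
Proof.
case: f_pu => proj_f orth_f _.
rewrite big_distrl [RHS]big_mkcondr /=; apply: eq_bigr => i _.
rewrite big_distrr /=; have [Qi | nQi] := boolP (Q i).
  rewrite (bigD1 i) //= big1 ?addr0; first by case: (proj_f i).
  by move=> j /andP[_]; rewrite eq_sym => /orth_f.
by rewrite big1 // => j Qj; apply: orth_f; apply: contraNneq nQi => ->.
Qed.

Lemma partition_of_unity_coarsen (J : finType) (g : I -> J) :
  partition_of_unity star (fun j => \sum_(i | g i == j) f i).
Proof.
split=> [j | j l neq_jl | ].
- split; first by rewrite partition_of_unity_sumM; apply: eq_bigl => i; rewrite andbb.
  rewrite star_sum; apply: eq_bigr => i _.
  by case: f_pu => proj_f _ _; case: (proj_f i).
- rewrite partition_of_unity_sumM big_pred0 // => i.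
  by apply: contraNF neq_jl => /andP[/eqP <- /eqP <-].
- by case: f_pu => _ _ <-; rewrite (partition_big g xpredT).
Qed.

End PartitionOfUnity.

Lemma sum_partition_preimage (V : finType) (P : {set {set V}}) (D : {set V})
  (R : nmodType) (I : finType) (q : I -> V) (h : I -> R) :
  partition P D ->
  \sum_(C in P) \sum_(i | q i \in C) h i = \sum_(i | q i \in D) h i.
Proof.
case/and3P=> /eqP coverP trivP _.
under eq_bigr => C _ do rewrite big_mkcond.
rewrite exchange_big [RHS]big_mkcond /=; apply: eq_bigr => i _.
rewrite -big_mkcondr /= -coverP.
have [qiP | qiNP] := boolP (q i \in cover P).
  rewrite (big_pred1 (pblock P (q i))) // => C /=.
  apply/andP/eqP => [[CP qiC] | ->]; first by rewrite (def_pblock trivP CP qiC).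
  by rewrite pblock_mem // mem_pblock.
rewrite big_pred0 // => C; apply/andP => -[CP qiC].
by case/negP: qiNP; apply/bigcupP; exists C.
Qed.

Lemma sum_pair_snd_eq (R : nmodType) (T Z : finType) (P : pred T)
  (g : T * Z -> R) (b : Z) :
  \sum_(z | P z.1 && (z.2 == b)) g z = \sum_(k | P k) g (k, b).
Proof.
transitivity (\sum_(k | P k) \sum_(c | c == b) g (k, c)).
  by rewrite pair_big_dep; apply: eq_bigr => -[].
by apply: eq_bigr => k _; rewrite big_pred1_eq.
Qed.

Definition lifted_class (T Z : finType) (C : {set T * T}) : {set (T * Z) * (T * Z)} :=
  [set ((u.1, a), (u.2, a)) | u in C, a in [set: Z]].

Lemma mem_lifted_class (T Z : finType) (C : {set T * T}) (x y : T * Z) :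
  ((x, y) \in lifted_class Z C) = ((x.1, y.1) \in C) && (x.2 == y.2).
Proof.
apply/imset2P/andP => [[u a uC _ [-> ->]] | ].
  by case: u uC.
by case: x y => [k a] [l b] /= [klC /eqP ->]; exists (k, l) b.
Qed.

Lemma lifted_class_free_product (T Z : finType) (E : {set {set T * T}})
  (F : {set {set Z * Z}}) (C : {set T * T}) :
  C \in E -> lifted_class Z C \in free_product E F.
Proof. by move=> CE; apply/setUP; left; apply/imsetP; exists C. Qed.

Section FreeProduct.

Variables (A : pzRingType) (star : A -> A) (T Z : finType).
Variables (E : {set {set T * T}}) (F : {set {set Z * Z}}).
Variable W : T * Z -> T * Z -> A.
Hypothesis W_rel : A_relations star (free_product E F) W.

Lemma lifted_class_relation (C : {set T * T}) (i j : T) (a b : Z) :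
  C \in E ->
  \sum_(k | (k, j) \in C) W (i, a) (k, b) = \sum_(k | (i, k) \in C) W (k, a) (j, b).
Proof.
move=> CE; case: W_rel => _ /(_ _ (lifted_class_free_product F CE) (i, a) (j, b)).
under eq_bigl => z do rewrite mem_lifted_class.
under [X in _ = X -> _]eq_bigl => z do rewrite mem_lifted_class /= eq_sym.
by rewrite (sum_pair_snd_eq (fun k => (k, j) \in C))
           (sum_pair_snd_eq (fun k => (i, k) \in C) (W^~ (j, b))).
Qed.

Hypothesis E_graph : colored_graph E.

Lemma block_row_sum_eq_col_sum (a b : Z) (i j : T) :
  \sum_(k : T) W (i, a) (k, b) = \sum_(k : T) W (k, a) (j, b).
Proof.
have offdiag_sums :
    \sum_(k | k != j) W (i, a) (k, b) = \sum_(k | k != i) W (k, a) (j, b).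
  have : \sum_(C in E) \sum_(k | (k, j) \in C) W (i, a) (k, b)
       = \sum_(C in E) \sum_(k | (i, k) \in C) W (k, a) (j, b).
    by apply: eq_bigr => C; apply: lifted_class_relation.
  rewrite (sum_partition_preimage (fun k => (k, j)) _ E_graph).
  rewrite (sum_partition_preimage (fun k => (i, k)) _ E_graph).
  by under eq_bigl => k do rewrite inE; under [in RHS]eq_bigl => k do rewrite inE eq_sym.
by rewrite (bigD1 j) // [RHS](bigD1 i) //= offdiag_sums.
Qed.

Hypothesis star_add : {morph star : x y / x + y}.

Lemma block_sum_magic (i0 : T) :
  magic star (fun a b : Z => \sum_(k : T) W (i0, a) (k, b)).
Proof.
case: W_rel => -[W_row W_col] _; split=> [a | b].
- apply: eq_partition_of_unity (partition_of_unity_coarsen star_add (W_row (i0, a)) snd).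
  by move=> b; rewrite (sum_pair_snd_eq xpredT).
- apply: eq_partition_of_unity
    (partition_of_unity_coarsen star_add (W_col (i0, b)) snd) => a /=.
  by rewrite (sum_pair_snd_eq xpredT (W^~ (i0, b))) (block_row_sum_eq_col_sum a b i0 i0).
Qed.

End FreeProduct.

Theorem lemma6p1 (A : pzRingType) (star : A -> A) (Hstar : is_involution star)
  (T Z : finType) (E : {set {set T * T}}) (F : {set {set Z * Z}})
  (HE : colored_graph E) (HF : colored_graph F)
  (W : T * Z -> T * Z -> A) (HW : A_relations star (free_product E F) W) :
  (forall (a b : Z) (i j : T),
      \sum_(k : T) W (i, a) (k, b) = \sum_(k : T) W (k, a) (j, b)) /\
  (forall i0 : T, magic star (fun a b : Z => \sum_(k : T) W (i0, a) (k, b))).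
Proof.
have [star_add _ _ _] := Hstar.
split; first exact: block_row_sum_eq_col_sum HW HE.
exact: block_sum_magic HW HE star_add.
Qed.
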